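(* Let $A$ be a Lie conformal algebra and $M$ an $A$-module with a commutative associative product such that $\partial^M$ and all $a_\lambda$ are derivations of it. For $\xi\in\tilde\Gamma_h(A,M)$ and $\zeta\in\tilde\Gamma_j(A,M)$ the contraction operators on $\tilde\Gamma^\bullet(A,M)$ satisfy $\iota_\xi\iota_\zeta=(-1)^{hj}\iota_\zeta\iota_\xi$.
   Context: $\mathbb F$ field of characteristic 0. $\tilde\Gamma^k(A,M)$: $\mathbb F$-linear $\tilde\gamma:A^{\otimes k}\to\mathbb F[\lambda_1,\dots,\lambda_k]\otimes M$ with $\tilde\gamma(\dots,\partial a_i,\dots)=-\lambda_i\tilde\gamma(\dots)$ and skew-symmetric under simultaneous permutations of the $a_i$ and $\lambda_i$. $\tilde\Gamma_h(A,M)$: quotient of $A^{\otimes h}\otimes\mathrm{Hom}_{\mathbb F}(\mathbb F[\lambda_1,\dots,\lambda_h],M)$ by (C1) $\cdots\otimes\partial a_i\otimes\cdots\otimes\phi=-\cdots\otimes\lambda_i^*\phi$ where $(\lambda_i^*\phi)(f)=\phi(\lambda_if)$, and (C2) $a_{\sigma(1)}\otimes\cdots\otimes a_{\sigma(h)}\otimes\sigma^*\phi=\mathrm{sign}(\sigma)a_1\otimes\cdots\otimes a_h\otimes\phi$ where $(\sigma^*\phi)(f(\lambda_1,..,\lambda_h))=\phi(f(\lambda_{\sigma(1)},..,\lambda_{\sigma(h)}))$. Contraction: for $\xi$ represented by $a_1\otimes\cdots\otimes a_h\otimes\phi$ and $\tilde\gamma\in\tilde\Gamma^k$, $k\ge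 h$, $(\iota_\xi\tilde\gamma)_{\lambda_{h+1},\dots,\lambda_k}(a_{h+1},\dots,a_k)=\phi^\mu(\tilde\gamma_{\lambda_1,\dots,\lambda_k}(a_1,\dots,a_k))$, where $\phi^\mu:\mathbb F[\lambda_1,\dots,\lambda_h]\otimes M\to M$, $f\otimes m\mapsto\phi(f)\,m$, applied coefficientwise in $\lambda_{h+1},\dots,\lambda_k$; $\iota_\xi=0$ on $\tilde\Gamma^k$ for $k<h$; extended linearly in $\xi$ (this is well defined and lands in $\tilde\Gamma^{k-h}$). *)

From HB Require Import structures.
From mathcomp Require Import all_boot all_order all_algebra all_fingroup.
From mathcomp Require Import finmap.
From mathcomp.multinomials Require Import monalg mpoly.
Set Implicit Arguments. Unset Strict Implicit. Unset Printing Implicit Defensive.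
Import Order.TTheory GRing.Theory Num.Theory.
Local Open Scope ring_scope.

(* For a F-module V, the space F[lambda]\otimes V is represented
   by {malg V[nat]} (finitely supported coefficient families: "cf n p" is the
   coefficient of lambda^n), and F[lambda_1..lambda_k]\otimes V by
   {malg V['X_{1..k}]} ("cf alpha p" is the coefficient of lambda^alpha). *)

Definition cf (K : choiceType) (G : zmodType) (k : K) (p : {malg G[K]}) : G :=
  monalg.mcoeff k p.

Definition supp (K : choiceType) (G : zmodType) (p : {malg G[K]}) : {fset K} :=
  monalg.msupp p.

(* coefficient of lambda^n in lambda * p *)
Definition shiftc (V : zmodType) (p : {malg V[nat]}) (n : nat) : V :=
  if n is n'.+1 then (cf n' (p)) else 0.

(* A is an F[d]-module (d linear), br a b = a_lambda b. *)
Definition is_lie_conformal (F : fieldType) (A : lmodType F)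
    (d : {linear A -> A}) (br : A -> A -> {malg A[nat]}) : Prop :=
  (forall (c : F) a a' b n,
      (cf n (br (c *: a + a') b)) = c *: (cf n (br a b)) + (cf n (br a' b))) /\
  (forall (c : F) a b b' n,
      (cf n (br a (c *: b + b'))) = c *: (cf n (br a b)) + (cf n (br a b'))) /\
  (* sesquilinearity: (da)_l b = -l a_l b,  a_l (db) = (l + d)(a_l b) *)
  (forall a b n, (cf n (br (d a) b)) = - shiftc (br a b) n) /\
  (forall a b n, (cf n (br a (d b))) = shiftc (br a b) n + d ((cf n (br a b)))) /\
  (* skew-symmetry: b_l a = - a_{-l-d} b *)
  (forall a b n, (cf n (br b a)) =
     - \sum_(p <- supp (br a b) | (n <= p)%N)
         (((-1) ^+ p * ('C(p, n))%:R) *: iter (p - n) d ((cf p (br a b))))) /\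
  (* Jacobi: a_l (b_m c) = (a_l b)_{l+m} c + b_m (a_l c),
     coefficient of l^r m^q *)
  (forall a b c r q,
     cf r (br a (cf q (br b c))) =
       \sum_(i < r.+1)
          (('C(q + r - i, r - i))%:R *: cf (q + r - i) (br (cf (i : nat) (br a b)) c))
       + cf q (br b (cf r (br a c)))).

(* dM = d^M, act a m = a_lambda m *)
Definition is_lca_module (F : fieldType) (A : lmodType F)
    (d : {linear A -> A}) (br : A -> A -> {malg A[nat]})
    (M : lmodType F) (dM : {linear M -> M}) (act : A -> M -> {malg M[nat]})
    : Prop :=
  (forall (c : F) a a' m n,
      (cf n (act (c *: a + a') m)) = c *: (cf n (act a m)) + (cf n (act a' m))) /\
  (forall (c : F) a m m' n,
      (cf n (act a (c *: m + m'))) = c *: (cf n (act a m)) + (cf n (act a m'))) /\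
  (forall a m n, (cf n (act (d a) m)) = - shiftc (act a m) n) /\
  (forall a m n, (cf n (act a (dM m))) = shiftc (act a m) n + dM ((cf n (act a m)))) /\
  (* [a_l, b_m] m = (a_l b)_{l+m} m, coefficient of l^r m^q *)
  (forall a b m r q,
     cf r (act a (cf q (act b m))) - cf q (act b (cf r (act a m))) =
       \sum_(i < r.+1)
          (('C(q + r - i, r - i))%:R *: cf (q + r - i) (act (cf (i : nat) (br a b)) m))).

Definition is_comm_assoc_product (F : fieldType) (M : lmodType F)
    (mul : M -> M -> M) : Prop :=
  (forall (c : F) x y z, mul (c *: x + y) z = c *: mul x z + mul y z) /\
  (forall x y, mul x y = mul y x) /\
  (forall x y z, mul x (mul y z) = mul (mul x y) z).

Definition product_derivations (F : fieldType) (A : lmodType F)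
    (M : lmodType F) (dM : {linear M -> M}) (act : A -> M -> {malg M[nat]})
    (mul : M -> M -> M) : Prop :=
  (forall x y, dM (mul x y) = mul (dM x) y + mul x (dM y)) /\
  (forall a x y n, (cf n (act a (mul x y))) = mul ((cf n (act a x))) y + mul x ((cf n (act a y)))).

Definition cochain (A M : zmodType) (k : nat) : Type :=
  ('I_k -> A) -> {malg M['X_{1..k}]}.

Definition upd (A : Type) k (x : 'I_k -> A) (i : 'I_k) (u : A) : 'I_k -> A :=
  fun j => if j == i then u else x j.

Definition is_cochain (F : fieldType) (A : lmodType F) (d : {linear A -> A})
    (M : lmodType F) (k : nat) (g : cochain A M k) : Prop :=
  (forall (x : 'I_k -> A) i (c : F) u v alpha,
     (cf alpha (g (upd x i (c *: u + v)))) =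
       c *: (cf alpha (g (upd x i u))) + (cf alpha (g (upd x i v)))) /\
  (* g(.., d a_i, ..) = - lambda_i g(..) *)
  (forall (x : 'I_k -> A) i (alpha : 'X_{1..k}),
     (cf alpha (g (upd x i (d (x i))))) =
       - (if (0 < alpha i)%N then (cf (alpha - U_(i))%MM (g x)) else 0)) /\
  (* skew-symmetry under simultaneous permutation of the a_i and lambda_i:
     g_{l_s(1),..,l_s(k)}(a_s(1),..,a_s(k)) = sign(s) g_{l_1..l_k}(a_1..a_k);
     the coefficient of lambda^alpha on the left is the coefficient of
     lambda^(alpha o s) in g(a o s). *)
  (forall (s : 'S_k) (x : 'I_k -> A) (alpha : 'X_{1..k}),
     (cf ([multinom alpha (s i) | i < k]) (g (x \o s))) =
       ((-1) ^+ odd_perm s) *: (cf alpha (g x))).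

(* (b_1..b_h, y_1..y_(k-h)) as a k-tuple (meaningful when h <= k) *)
Definition join (A : zmodType) h m k (b : 'I_h -> A) (y : 'I_m -> A)
    (i : 'I_k) : A :=
  match (insub (val i) : option 'I_h) with
  | Some i' => b i'
  | None => match (insub (val i - h)%N : option 'I_m) with
            | Some j => y j
            | None => 0 end
  end.

Definition mfirst k h (alpha : 'X_{1..k}) : 'X_{1..h} :=
  [multinom nth 0%N (tval (multinom_val alpha)) i | i < h].
Definition mlast k h (alpha : 'X_{1..k}) : 'X_{1..k - h} :=
  [multinom nth 0%N (tval (multinom_val alpha)) (h + i) | i < k - h].

(* contraction by a pure tensor  b_1 (x) .. (x) b_h (x) phi,
   phi in Hom_F(F[lambda_1..lambda_h], M); zero when k < h *)
Definition contract_pure (F : fieldType) (A : lmodType F) (M : lmodType F)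
    (mul : M -> M -> M) h (b : 'I_h -> A) (phi : {linear {mpoly F[h]} -> M})
    k (g : cochain A M k) : cochain A M (k - h) :=
  fun y =>
    if (h <= k)%N then
      \sum_(alpha <- supp (g (join b y)))
         << mul (phi 'X_[mfirst h alpha]) ((cf alpha (g (join b y))))
            *g mlast h alpha >>
    else 0.

(* An element of Gamma~_h(A,M), given by a representative: a finite sum of
   pure tensors b_1 (x) .. (x) b_h (x) phi. *)
Definition chain (F : fieldType) (A : lmodType F) (M : lmodType F) (h : nat)
  := seq (('I_h -> A) * {linear {mpoly F[h]} -> M}).

Definition contract (F : fieldType) (A : lmodType F) (M : lmodType F)
    (mul : M -> M -> M) h (xi : chain A M h) k (g : cochain A M k)
    : cochain A M (k - h) :=
  fun y => \sum_(t <- xi) contract_pure mul t.1 t.2 g y.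

Definition castC (A M : zmodType) m n (e : m = n) (g : cochain A M m)
  : cochain A M n := ecast n (cochain A M n) e g.

(* Both iterated contractions evaluate [g] at the same arguments: the
   contraction with [zeta] consumes the first [j] slots and that with [xi] the
   next [h], while in the other order [xi] comes first.  The two argument tuples
   and the two multi-indices of the [lambda]'s therefore differ by the
   permutation exchanging the block of the first [h] slots with the next [j]
   ones, whose signature is [(-1)^(h j)].  Skew-symmetry of [g] produces this
   sign, and commutativity and associativity of the product exchange the factors
   [phi(lambda^..)] and [psi(lambda^..)].  Nothing else about [A] or [M] is
   needed. *)

From Pilot Require Import Defs.
From mathcomp Require Import all_boot all_order all_algebra all_fingroup.
From mathcomp Require Import finmap zify.
From mathcomp.multinomials Require Import monalg mpoly.
From Stdlib Require Import FunctionalExtensionality.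
(* Re-import so that [mfirst]/[mlast] of Defs shadow those of mpoly. *)
Import Pilot.Defs.
Set Implicit Arguments. Unset Strict Implicit. Unset Printing Implicit Defensive.
Import Order.TTheory GRing.Theory Num.Theory.
Local Open Scope ring_scope.

(* Coordinates read off the underlying tuple, with default [0] out of range:
   this is how [mfirst] and [mlast] access them, and it lets multinomials of
   provably (but not definitionally) equal lengths be compared. *)
Definition mnm_at n (a : 'X_{1..n}) (p : nat) : nat :=
  nth 0%N (tval (multinom_val a)) p.

Lemma mnm_atE n (a : 'X_{1..n}) (i : 'I_n) : mnm_at a i = a i.
Proof. by rewrite /mnm_at (mnm_nth 0%N). Qed.

Lemma mnm_at_default n (a : 'X_{1..n}) p : (n <= p)%N -> mnm_at a p = 0%N.
Proof. by move=> np; rewrite /mnm_at nth_default // size_tuple. Qed.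

Lemma eq_mnm_at n (a b : 'X_{1..n}) :
  (forall i : 'I_n, mnm_at a i = mnm_at b i) -> a = b.
Proof. by move=> eq_ab; apply/mnmP => i; rewrite -!mnm_atE eq_ab. Qed.

Lemma eq_mnm_atE n m (a b : 'X_{1..n}) (a' b' : 'X_{1..m}) :
  (forall p, mnm_at a p = mnm_at a' p) -> (forall p, mnm_at b p = mnm_at b' p) ->
  (a == b) = (a' == b').
Proof.
move=> eq_a eq_b; apply/eqP/eqP => [|] eq_ab; apply: eq_mnm_at => i.
  by rewrite -eq_a -eq_b eq_ab.
by rewrite eq_a eq_b eq_ab.
Qed.

Lemma mnm_at_mlast k h (a : 'X_{1..k}) p :
  (h <= k)%N -> mnm_at (mlast h a) p = mnm_at a (h + p)%N.
Proof.
move=> hk; case: (ltnP p (k - h)) => p_lt; last by rewrite !mnm_at_default //; lia.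
by rewrite -[p]/(val (Ordinal p_lt)) mnm_atE /mlast mnmE.
Qed.

Lemma mnm_at_mfirst k h (a : 'X_{1..k}) p :
  mnm_at (mfirst h a) p = if (p < h)%N then mnm_at a p else 0%N.
Proof.
case: (ltnP p h) => p_lt; last by rewrite mnm_at_default.
by rewrite -[p]/(val (Ordinal p_lt)) mnm_atE /mfirst mnmE.
Qed.

Lemma mnm_at_cast m n (e : m = n) (a : 'X_{1..n}) p :
  mnm_at [multinom a (cast_ord e i) | i < m] p = mnm_at a p.
Proof.
case: n / e a => a; case: (ltnP p m) => p_lt; last by rewrite !mnm_at_default.
by rewrite -[p]/(val (Ordinal p_lt)) !mnm_atE mnmE cast_ord_id.
Qed.

Definition perm_mnm k (s : 'S_k) (a : 'X_{1..k}) : 'X_{1..k} :=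
  [multinom a (s i) | i < k].

Lemma perm_mnmK k (s : 'S_k) : cancel (perm_mnm s) (perm_mnm s^-1).
Proof. by move=> a; apply/mnmP => i; rewrite !mnmE permKV. Qed.

Lemma perm_mnmVK k (s : 'S_k) : cancel (perm_mnm s^-1) (perm_mnm s).
Proof. by move=> a; apply/mnmP => i; rewrite !mnmE permK. Qed.

Lemma cf_castC (A M : zmodType) m n (e : m = n) (G : cochain A M m)
    (y : 'I_n -> A) (a : 'X_{1..n}) :
  cf a (castC e G y) = cf [multinom a (cast_ord e i) | i < m] (G (y \o cast_ord e)).
Proof.
case: n / e y a => y a.
have -> : y \o cast_ord erefl = y.
  by apply: functional_extensionality => i; rewrite /= cast_ord_id.
by congr cf; apply/mnmP => i; rewrite mnmE cast_ord_id.
Qed.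

Lemma cf_sum (K : choiceType) (G : zmodType) (I : Type) (r : seq I)
    (Q : I -> {malg G[K]}) b :
  cf b (\sum_(i <- r) Q i) = \sum_(i <- r) cf b (Q i).
Proof. by rewrite /cf raddf_sum. Qed.

Lemma cf0 (K : choiceType) (G : zmodType) b : cf b (0 : {malg G[K]}) = 0.
Proof. by rewrite /cf monalg.mcoeff0. Qed.

Section MalgSum.
Variables (K : choiceType) (G : zmodType) (F : K -> G -> G).
Hypothesis FD : forall b, {morph F b : x y / x + y}.

Definition msum (Q : {malg G[K]}) : G := \sum_(b <- supp Q) F b (cf b Q).

Lemma msumEw Q (S : seq K) :
  uniq S -> {subset supp Q <= S} -> msum Q = \sum_(b <- S) F b (cf b Q).
Proof.
move=> uniq_S sub_S; rewrite (bigID (mem (supp Q))) /=.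
have F0 b : F b 0 = 0 by apply: (@addrI _ (F b 0)); rewrite -FD !addr0.
rewrite [X in _ = _ + X]big1 ?addr0; last first.
  by move=> b /monalg.mcoeff_outdom; rewrite /cf => ->.
rewrite -big_filter /msum; apply/perm_big/uniq_perm; rewrite ?filter_uniq //.
by move=> b; rewrite mem_filter; case: (boolP (b \in supp Q)) => //= /sub_S.
Qed.

Lemma msumD Q1 Q2 : msum (Q1 + Q2) = msum Q1 + msum Q2.
Proof.
have sub1 : {subset supp Q1 <= (supp Q1 `|` supp Q2)%fset}.
  by move=> b b_in; rewrite in_fsetU b_in.
have sub2 : {subset supp Q2 <= (supp Q1 `|` supp Q2)%fset}.
  by move=> b b_in; rewrite in_fsetU b_in orbT.
have sub12 : {subset supp (Q1 + Q2) <= (supp Q1 `|` supp Q2)%fset}.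
  exact/fsubsetP/monalg.msuppD_le.
rewrite (msumEw (fset_uniq _) sub1) (msumEw (fset_uniq _) sub2).
rewrite (msumEw (fset_uniq _) sub12) -big_split /=.
by apply: eq_bigr => b _; rewrite /cf monalg.mcoeffD FD.
Qed.

Lemma msum_sum (I : Type) (r : seq I) (Q : I -> {malg G[K]}) :
  msum (\sum_(i <- r) Q i) = \sum_(i <- r) msum (Q i).
Proof.
elim: r => [|i r IHr]; last by rewrite !big_cons msumD IHr.
by rewrite !big_nil /msum /supp monalg.msupp0 big_nil.
Qed.

Lemma msumU x b : msum << x *g b >> = F b x.
Proof.
have sub_b : {subset supp << x *g b >> <= [:: b]}.
  by move=> c /(fsubsetP monalg.msuppU_le); rewrite in_fset1 inE.
by rewrite (msumEw _ sub_b) // big_seq1 /cf monalg.mcoeffUU.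
Qed.

End MalgSum.

Lemma msum_reindex (K K' : choiceType) (G : zmodType) (F : K' -> G -> G)
    (FD : forall b, {morph F b : x y / x + y})
    (T : K -> G -> G) (L : K -> K') (Q : {malg G[K]}) :
  msum F (\sum_(a <- supp Q) << T a (cf a Q) *g L a >>) =
  msum (fun a x => F (L a) (T a x)) Q.
Proof. by rewrite msum_sum //; apply: eq_bigr => a _; rewrite msumU. Qed.

Lemma cf_reindex (K K' : choiceType) (G : zmodType) (T : K -> G -> G)
    (L : K -> K') (Q : {malg G[K]}) b :
  cf b (\sum_(a <- supp Q) << T a (cf a Q) *g L a >>) =
  msum (fun a x => T a x *+ (L a == b)) Q.
Proof. by rewrite /cf raddf_sum; apply: eq_bigr => a _; exact: monalg.mcoeffU. Qed.

Fixpoint block_swap (j h N : nat) {struct h} : 'S_N :=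
  match h, N return 'S_N with
  | h'.+1, N'.+1 => lift_perm ord0 (inord j) (block_swap j h' N')
  | _, _ => 1%g
  end.

Definition block_swap_fun (j h p : nat) : nat :=
  if (p < h)%N then (p + j)%N else if (p < h + j)%N then (p - h)%N else p.

Lemma odd_block_swap j h N : (h + j <= N)%N -> odd_perm (block_swap j h N) = odd (h * j).
Proof.
elim: h N => [|h IHh] [|N] /=; rewrite ?odd_perm1 // => hjN.
rewrite odd_lift_perm /= inordK; last by lia.
by rewrite IHh 1?mulSn ?oddD 1?addbC //; lia.
Qed.

Lemma block_swapE j h N (i : 'I_N) :
  (h + j <= N)%N -> val (block_swap j h N i) = block_swap_fun j h i.
Proof.
elim: h N i => [|h IHh] N i hjN.
  by rewrite /= perm1 /block_swap_fun ltn0 subn0; case: ifP.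
case: N i hjN => [|N] i hjN; first by case: i.
case: (unliftP ord0 i) => [i' -> | ->] /=; last first.
  by rewrite lift_perm_id /= inordK //; lia.
rewrite lift_perm_lift /= /bump IHh; last by lia.
rewrite inordK; last by lia.
rewrite /block_swap_fun /=.
by case: ifP => ?; case: ifP => ?; try case: ifP => ?; try case: ifP => ?; lia.
Qed.

Section BlockSwapMonomials.
Variables (j h k : nat) (a : 'X_{1..k}).
Hypothesis hjk : (h + j <= k)%N.
Let b := perm_mnm (block_swap j h k) a.

Lemma mnm_at_block_swap p : mnm_at b p = mnm_at a (block_swap_fun j h p).
Proof.
case: (ltnP p k) => p_lt; last first.
  have -> : block_swap_fun j h p = p by rewrite /block_swap_fun !ifF //; lia.
  by rewrite !mnm_at_default.
by rewrite -[p]/(val (Ordinal p_lt)) mnm_atE mnmE -mnm_atE block_swapE.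
Qed.

Lemma mfirst_block_swap : mfirst h b = mfirst h (mlast j a).
Proof.
apply: eq_mnm_at => i; rewrite !mnm_at_mfirst ltn_ord mnm_at_block_swap.
by rewrite mnm_at_mlast /block_swap_fun ?ltn_ord 1?addnC //; lia.
Qed.

Lemma mfirst_mlast_block_swap : mfirst j (mlast h b) = mfirst j a.
Proof.
apply: eq_mnm_at => i; rewrite !mnm_at_mfirst ltn_ord mnm_at_mlast; last by lia.
have i_lt := ltn_ord i; rewrite mnm_at_block_swap /block_swap_fun.
by rewrite ifF ?ifT ?addKn //; lia.
Qed.

Lemma mnm_at_mlast2_block_swap p :
  mnm_at (mlast j (mlast h b)) p = mnm_at (mlast h (mlast j a)) p.
Proof.
rewrite !mnm_at_mlast ?mnm_at_block_swap /block_swap_fun; try lia.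
by rewrite !ifF 1?addnCA //; lia.
Qed.

End BlockSwapMonomials.

Section CommProduct.
Variables (F : fieldType) (M : lmodType F) (mul : M -> M -> M).
Hypothesis hmul : is_comm_assoc_product mul.

Lemma cmulDl x y z : mul (x + y) z = mul x z + mul y z.
Proof. by have := hmul.1 1 x y z; rewrite !scale1r. Qed.

Lemma cmulZl c x z : mul (c *: x) z = c *: mul x z.
Proof.
have mul0l : mul 0 z = 0.
  by apply: (@addrI _ (mul 0 z)); rewrite -cmulDl !addr0.
by have := hmul.1 c x 0 z; rewrite !addr0 mul0l addr0.
Qed.

Lemma cmulDr x y z : mul z (x + y) = mul z x + mul z y.
Proof. by rewrite !(hmul.2.1 z) cmulDl. Qed.

Lemma cmulZr c x z : mul z (c *: x) = c *: mul z x.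
Proof. by rewrite !(hmul.2.1 z) cmulZl. Qed.

Lemma cmulCA x y z : mul x (mul y z) = mul y (mul x z).
Proof. by rewrite !hmul.2.2 (hmul.2.1 x). Qed.

End CommProduct.

Lemma msum_cochain_perm (F : fieldType) (A M : lmodType F) (d : {linear A -> A})
    k (g : cochain A M k) (hg : is_cochain d g) (s : 'S_k) (x : 'I_k -> A)
    (Fo : 'X_{1..k} -> M -> M) (FoD : forall a, {morph Fo a : u v / u + v})
    (FoZ : forall a c u, Fo a (c *: u) = c *: Fo a u) :
  msum Fo (g (x \o s)) = (-1) ^+ odd_perm s *: msum (fun a => Fo (perm_mnm s a)) (g x).
Proof.
have cf_perm a : cf (perm_mnm s a) (g (x \o s)) = (-1) ^+ odd_perm s *: cf a (g x).
  exact: hg.2.2.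
rewrite (msumEw FoD (S := [seq perm_mnm s a | a <- supp (g x)])); first last.
- move=> b b_in; rewrite -[b](perm_mnmVK s); apply: map_f.
  move: b_in; rewrite /supp -!monalg.mcoeff_neq0; apply: contra => /eqP coef0.
  by have := cf_perm (perm_mnm s^-1 b); rewrite perm_mnmVK /cf coef0 scaler0 => ->.
- by rewrite map_inj_uniq ?fset_uniq //; apply: can_inj (perm_mnmK s).
by rewrite big_map scaler_sumr; apply: eq_bigr => a _; rewrite cf_perm FoZ.
Qed.

Section Joins.
Variable A : zmodType.

(* Tuples of different lengths are compared through their zero extensions to
   functions on [nat]. *)
Definition zext n (x : 'I_n -> A) (p : nat) : A :=
  if insub p is Some i then x i else 0.

Definition agree n (x : 'I_n -> A) (f : nat -> A) := forall i : 'I_n, x i = f i.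

Lemma agree_zext n (x : 'I_n -> A) : agree x (zext x).
Proof. by move=> i; rewrite /zext valK. Qed.

Lemma join_agree h m n (b : 'I_h -> A) (y : 'I_m -> A) fb fy :
  agree b fb -> agree y fy -> (n <= h + m)%N ->
  agree (@join A h m n b y) (fun p => if (p < h)%N then fb p else fy (p - h)%N).
Proof.
move=> agree_b agree_y n_le i; rewrite /join.
case: insubP => [i' i_lt val_i' | i_ge]; first by rewrite agree_b val_i' i_lt.
case: insubP => [i' _ val_i' | i_ge']; first by rewrite agree_y val_i' (negbTE i_ge).
by exfalso; move: i_ge i_ge' (valP i); rewrite -!leqNgt; lia.
Qed.

Lemma join2_block_swap h j k (b : 'I_h -> A) (c : 'I_j -> A)
    (y : 'I_(k - h - j) -> A) (e : (k - j - h = k - h - j)%N) (i : 'I_k) :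
  (h + j <= k)%N ->
  @join A h _ k b (@join A j _ (k - h) c y) i =
  @join A j _ k c (@join A h _ (k - j) b (y \o cast_ord e)) (block_swap j h k i).
Proof.
move=> hjk.
have agree_y' : agree (y \o cast_ord e) (zext y).
  by move=> i'; exact: (agree_zext y (cast_ord e i')).
rewrite (join_agree (agree_zext b) (join_agree (agree_zext c) (agree_zext y) _)); try lia.
rewrite (join_agree (agree_zext c) (join_agree (agree_zext b) agree_y' _)); try lia.
rewrite block_swapE // /block_swap_fun.
case: (ltnP i h) => [i_lt | i_ge].
  by rewrite addnK i_lt ifF //; lia.
case: (ltnP i (h + j)) => [i_lt | i_ge'].
  by have -> : (i - h < j)%N by lia.
have -> : (i - h < j)%N = false by lia.
have -> : (i < j)%N = false by lia.
have -> : (i - j < h)%N = false by lia.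
by rewrite [(i - j - h)%N]subnAC.
Qed.

End Joins.

Section Contraction.
Variables (F : fieldType) (A M : lmodType F) (mul : M -> M -> M).
Hypothesis hmul : is_comm_assoc_product mul.

Lemma cf_contract_pure h (b : 'I_h -> A) (phi : {linear {mpoly F[h]} -> M})
    k (g : cochain A M k) y gam :
  (h <= k)%N -> cf gam (contract_pure mul b phi g y) =
  msum (fun a m => mul (phi 'X_[mfirst h a]) m *+ (mlast h a == gam)) (g (join b y)).
Proof.
move=> hk; rewrite /contract_pure hk.
exact: (cf_reindex (fun a m => mul (phi 'X_[mfirst h a]) m) (mlast h)).
Qed.

Lemma msum_contract_pure h (b : 'I_h -> A) (phi : {linear {mpoly F[h]} -> M})
    k (g : cochain A M k) y (Fo : 'X_{1..k - h} -> M -> M)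
    (FoD : forall a, {morph Fo a : u v / u + v}) :
  (h <= k)%N -> msum Fo (contract_pure mul b phi g y) =
  msum (fun a m => Fo (mlast h a) (mul (phi 'X_[mfirst h a]) m)) (g (join b y)).
Proof.
move=> hk; rewrite /contract_pure hk.
exact: (msum_reindex FoD (fun a m => mul (phi 'X_[mfirst h a]) m) (mlast h)).
Qed.

Lemma contract_gt h (xi : chain A M h) k (g : cochain A M k) y :
  (k < h)%N -> contract mul xi g y = 0.
Proof. by move=> kh; rewrite /contract big1 // => t _; rewrite /contract_pure leqNgt kh. Qed.

Lemma contract2_gt h j (xi : chain A M h) (zeta : chain A M j) k (g : cochain A M k) y :
  (k < h + j)%N -> contract mul xi (contract mul zeta g) y = 0.
Proof.
move=> k_lt; rewrite /contract big1 // => t _; rewrite /contract_pure.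
case: ifP => // hk; have zeta_g0 z : contract mul zeta g z = 0 by apply: contract_gt; lia.
by rewrite /contract in zeta_g0; rewrite zeta_g0 /supp monalg.msupp0 big_nil.
Qed.

Lemma cf_contract2 h j (xi : chain A M h) (zeta : chain A M j) k (g : cochain A M k)
    (y : 'I_(k - j - h) -> A) gam :
  (h + j <= k)%N ->
  cf gam (contract mul xi (contract mul zeta g) y) =
  \sum_(t <- xi) \sum_(u <- zeta)
    msum (fun a m => mul (t.2 'X_[mfirst h (mlast j a)]) (mul (u.2 'X_[mfirst j a]) m)
                     *+ (mlast h (mlast j a) == gam))
      (g (join u.1 (@join A h _ (k - j) t.1 y))).
Proof.
move=> hjk; rewrite /contract cf_sum; apply: eq_bigr => t _.
rewrite cf_contract_pure; last by lia.
rewrite msum_sum => [|a u v]; last by rewrite (cmulDr hmul) mulrnDl.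
apply: eq_bigr => u _; rewrite msum_contract_pure => [//|a v w|]; last by lia.
by rewrite (cmulDr hmul) mulrnDl.
Qed.

Lemma msum_contract2_swap (d : {linear A -> A}) h j k (g : cochain A M k)
    (hg : is_cochain d g) (phi : {linear {mpoly F[h]} -> M})
    (psi : {linear {mpoly F[j]} -> M}) (x1 x2 : 'I_k -> A)
    (gam : 'X_{1..k - h - j}) (gam' : 'X_{1..k - j - h}) :
  (h + j <= k)%N -> (forall i, x2 i = x1 (block_swap j h k i)) ->
  (forall p, mnm_at gam' p = mnm_at gam p) ->
  msum (fun a m => mul (phi 'X_[mfirst h (mlast j a)]) (mul (psi 'X_[mfirst j a]) m)
                   *+ (mlast h (mlast j a) == gam')) (g x1) =
  (-1) ^+ (h * j) *:
  msum (fun a m => mul (psi 'X_[mfirst j (mlast h a)]) (mul (phi 'X_[mfirst h a]) m)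
                   *+ (mlast j (mlast h a) == gam)) (g x2).
Proof.
move=> hjk x2E gamE.
have -> : x2 = x1 \o block_swap j h k by apply: functional_extensionality.
rewrite (msum_cochain_perm hg) => [|a u v|a e u]; first last.
- by rewrite !(cmulZr hmul) -scalerMnr.
- by rewrite !(cmulDr hmul) mulrnDl.
rewrite odd_block_swap // signr_odd signrZK; apply: eq_bigr => a _.
have last_swap : (mlast j (mlast h (perm_mnm (block_swap j h k) a)) == gam) =
                 (mlast h (mlast j a) == gam').
  by apply: eq_mnm_atE => p; [exact: mnm_at_mlast2_block_swap | rewrite gamE].
by rewrite mfirst_block_swap // mfirst_mlast_block_swap // last_swap (cmulCA hmul).
Qed.

End Contraction.

Theorem proposition3p4
  (F : fieldType) (charF0 : [pchar F] =i pred0)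
  (A : lmodType F) (d : {linear A -> A}) (br : A -> A -> {malg A[nat]})
  (hA : is_lie_conformal d br)
  (M : lmodType F) (dM : {linear M -> M}) (act : A -> M -> {malg M[nat]})
  (hM : is_lca_module d br dM act)
  (mul : M -> M -> M) (hmul : is_comm_assoc_product mul)
  (hder : product_derivations dM act mul)
  (h j : nat) (xi : chain A M h) (zeta : chain A M j)
  (k : nat) (g : cochain A M k) (hg : is_cochain d g)
  (y : 'I_(k - h - j) -> A) (alpha : 'X_{1..k - h - j}) :
  (cf alpha (castC (subnAC k j h) (contract mul xi (contract mul zeta g)) y)) =
  ((-1) ^+ (h * j)) *: (cf alpha (contract mul zeta (contract mul xi g) y)).
Proof.
rewrite cf_castC.
case: (leqP (h + j) k) => hjk; last first.
  by rewrite !contract2_gt ?cf0 ?scaler0 //; lia.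
rewrite !cf_contract2 //; last by lia.
rewrite scaler_sumr; under [RHS]eq_bigr do rewrite scaler_sumr.
rewrite [RHS]exchange_big /=.
apply: eq_bigr => t _; apply: eq_bigr => u _.
apply: (msum_contract2_swap hmul hg) => // [i|p]; last exact: mnm_at_cast.
exact: join2_block_swap.
Qed.
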